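(* The matrix $Z=(\alpha(i,j))_{i,j\in\mathbf N}$ has the following properties: (a) $\alpha(i,j)=\delta_{i,j}$ if $i$ is odd. (b) If $i=d2^k$ with $d$ odd and $k\ge1$, then $\alpha(i,j)=\alpha_k(j/d)$ if $d\mid j$, and $\alpha(i,j)=0$ otherwise. (c) $\alpha(im,jm)=\alpha(i,j)$ whenever $m$ is odd. (d) $Z$ is upper unitriangular. (e) $ZDZ^{-1}=J$. (f) $Z\in\mathcal{DR}_0$. Moreover, $Z$ is the unique matrix (indexed by $\mathbf N\times\mathbf N$) satisfying (a) and (e).
   Context: $\mathbf N=\{1,2,\dots\}$. For $k,m\in\mathbf N$, $\alpha_k(m)$ is the number of $k$-tuples of integers $\ge2$ with product $m$. The divisor matrix $D=(d_{i,j})$ has $d_{i,j}=1$ if $i\mid j$ and $0$ otherwise. $J=(J_{i,j})$ has $J_{i,j}=1$ if $j\in\{i,2i\}$ and $0$ otherwise. $Z$ is defined as follows: its odd-indexed rows have a single nonzero entry, equal to $1$, on the diagonal; for $i=2^kd$ with $d$ odd and $k\ge1$, the $i$-th row of $Z$ equals the $d$-th row of $(D-I)^k$. $\mathcal{DR}_0$ is the set of $\mathbf N\times\mathbf N$ complex matrices $A=(a_{i,j})$ with finitely many nonzero entries in each column for which there exist positive constants $C,c$ with $a_{i,j}=0$ whenever $i>Cj^c$ and $|a_{i,j}|\le Cj^c$ for all $i,j$. *)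

From mathcomp Require Import all_boot all_order all_algebra.
From mathcomp Require Import reals exp.
From mathcomp Require Import complex.
Set Implicit Arguments. Unset Strict Implicit. Unset Printing Implicit Defensive.
Import Order.TTheory GRing.Theory Num.Theory.
Local Open Scope ring_scope.

(* An N x N matrix (N = {1,2,...}) with complex entries.  Only entries with
   both indices >= 1 are meaningful; index 0 is junk and ignored everywhere. *)
Definition mx (R : realType) := nat -> nat -> R[i].

Definition mxeq (R : realType) (A B : mx R) : Prop :=
  forall i j, (0 < i)%N -> (0 < j)%N -> A i j = B i j.

Definition colfinite (R : realType) (A : mx R) : Prop :=
  forall j, (0 < j)%N -> exists N, forall i, (N <= i)%N -> A i j = 0.

Definition is_mxprod (R : realType) (A B P : mx R) : Prop :=
  forall i j, (0 < i)%N -> (0 < j)%N ->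
    exists N, (forall l, (N <= l)%N -> B l j = 0) /\
              P i j = \sum_(1 <= l < N) A i l * B l j.

Definition idmx (R : realType) : mx R := fun i j => (i == j)%:R.

Definition Dmx (R : realType) : mx R := fun i j => (dvdn i j)%:R.

Definition Jmx (R : realType) : mx R := fun i j => ((j == i) || (j == 2 * i)%N)%:R.

(* product of A with an upper triangular B (B_{lj} = 0 for l > j): the sum
   over l runs over 1 <= l <= j, which is the full matrix product. *)
Definition mulU (R : realType) (A B : mx R) : mx R :=
  fun i j => \sum_(1 <= l < j.+1) A i l * B l j.

(* D - I is upper triangular, so its powers are computed by mulU *)
Definition DmIpow (R : realType) (k : nat) : mx R :=
  iter k (fun P => mulU P (fun i j => Dmx R i j - idmx R i j)) (idmx R).

(* The matrix Z: odd rows are rows of the identity; for i = 2^k d, d odd,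
   k >= 1, row i of Z is row d of (D - I)^k.  Here k = logn 2 i is the
   2-adic valuation of i and d = i %/ 2^k. *)
Definition Zmx (R : realType) : mx R := fun i j =>
  if odd i then (i == j)%:R
  else DmIpow R (logn 2 i) (i %/ 2 ^ logn 2 i)%N j.

(* alpha_k(m): number of k-tuples of integers >= 2 whose product is m.
   (For m >= 1 every such factor is <= m, so tuples over 'I_m.+1 suffice.) *)
Definition alpha (k m : nat) : nat :=
  #|[set t : k.-tuple 'I_m.+1 |
      all (fun x : 'I_m.+1 => (2 <= x)%N) t && (\prod_(x <- t) (x : nat) == m)%N]|.

(* "X D X^{-1} = J", X^{-1} a two-sided inverse in the ring of
   column-finite matrices *)
Definition conj_D_J (R : realType) (X : mx R) : Prop :=
  exists Xi XD : mx R,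
    [/\ colfinite Xi, is_mxprod X Xi (idmx R), is_mxprod Xi X (idmx R),
        is_mxprod X (Dmx R) XD & is_mxprod XD Xi (Jmx R)].

Definition odd_rows_unit (R : realType) (X : mx R) : Prop :=
  forall i j, (0 < i)%N -> (0 < j)%N -> odd i -> X i j = (i == j)%:R.

Definition DR0 (R : realType) (A : mx R) : Prop :=
  colfinite A /\
  exists C c : R, [/\ 0 < C, 0 < c &
    forall i j, (0 < i)%N -> (0 < j)%N ->
      (C * powR (j%:R) c < i%:R -> A i j = 0) /\
      `|A i j| <= real_complex R (C * powR (j%:R) c)].

(* Row d 2^k of Z is row d of (D - I)^k, whose entry (d, j) counts the chains
   d = l_0 | l_1 | ... | l_k = j of proper divisions; the successive quotients
   l_(i+1) / l_i turn such a chain into an ordered factorization of j / d into k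
   factors >= 2, which gives (b) and then (c).  Each step of a chain at least
   doubles, so Z is unitriangular and back substitution yields a two-sided
   inverse.  Row 2i of Z is row i of Z (D - I), which is exactly Z D = J Z.
   Conversely (a) and X D = J X determine every row d 2^k of X by induction on k,
   whence uniqueness.  For (f), the number of chains ending at j is at most j^2,
   because sum_(e >= 2) (j / e)^2 <= j^2 (1 - 1/j). *)

From mathcomp Require Import all_boot all_order all_algebra.
From mathcomp Require Import reals exp.
From mathcomp Require Import complex.
From mathcomp Require Import zify ring lra.
Import Order.TTheory GRing.Theory Num.Theory.

Lemma big_nat_only [R : Type] [idx : R] (op : Monoid.com_law idx) (F : nat -> R)
    a b L :
  a <= L < b -> (forall l, a <= l < b -> l != L -> F l = idx) ->
  \big[op/idx]_(a <= l < b) F l = F L.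
Proof.
move=> abL F0; rewrite (bigD1_seq L) ?mem_index_iota ?iota_uniq //=.
rewrite big1_seq ?Monoid.mulm1 // => l /andP[lL]; rewrite mem_index_iota => abl.
exact: F0.
Qed.

Lemma big_nat_trunc [R : Type] [idx : R] (op : Monoid.law idx) [F : nat -> R]
    [a N M : nat] :
  N <= M -> (forall l, N <= l -> F l = idx) ->
  \big[op/idx]_(a <= l < M) F l = \big[op/idx]_(a <= l < N) F l.
Proof.
move=> le_NM F0; have [le_Na | lt_aN] := leqP N a.
  rewrite [RHS]big_geq // big1_seq // => l /andP[_].
  by rewrite mem_index_iota => /andP[? _]; apply: F0; lia.
rewrite (big_cat_nat (ltnW lt_aN) le_NM) /= [X in op _ X]big1_seq ?Monoid.mulm1 //.
by move=> l /andP[_]; rewrite mem_index_iota => /andP[? _]; apply: F0.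
Qed.

Lemma big_tuple_cons [R : Type] [idx : R] (op : Monoid.com_law idx) (T : finType) k
    (F : k.+1.-tuple T -> R) :
  \big[op/idx]_(t : k.+1.-tuple T) F t =
  \big[op/idx]_(x : T) \big[op/idx]_(t : k.-tuple T) F [tuple of x :: t].
Proof.
rewrite pair_big (reindex (fun p : T * k.-tuple T => [tuple of p.1 :: p.2])) //=.
exists (fun u : k.+1.-tuple T => (thead u, [tuple of behead u])).
  by move=> [x t] _ /=; congr pair; apply: val_inj.
by move=> u _; rewrite [RHS]tuple_eta.
Qed.

Lemma big_tuple0 [R : Type] [idx : R] (op : Monoid.com_law idx) (T : finType)
    (F : 0.-tuple T -> R) :
  \big[op/idx]_(t : 0.-tuple T) F t = F [tuple].
Proof. by rewrite (big_pred1 [tuple]) // => t; rewrite /= (tuple0 t); apply/esym/eqP. Qed.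

Lemma proper_divisor_double [l j : nat] : 0 < j -> l %| j -> l != j -> 2 * l <= j.
Proof.
move=> j0 /dvdnP[q def_j] ne; subst j.
case: q j0 ne => [|[|q]] j0 ne; [by rewrite mul0n in j0 | by rewrite mul1n eqxx in ne | nia].
Qed.

Lemma odd_mul_pow2P [i : nat] : 0 < i -> exists d k, odd d /\ i = d * 2 ^ k.
Proof.
move=> i0; have [d d_odd def_i] := pfactor_coprime (isT : prime 2) i0.
by exists d, (logn 2 i); rewrite -coprime2n.
Qed.

Lemma logn2_odd_mul d k : odd d -> logn 2 (d * 2 ^ k) = k.
Proof. by move=> d_odd; rewrite logn_Gauss ?coprime2n // pfactorK. Qed.

Fixpoint nchains (k d j : nat) : nat :=
  if k is k'.+1 then \sum_(1 <= l < j.+1) nchains k' d l * ((l %| j) && (l != j))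
  else d == j.

Lemma nchains_small k d j : j < d * 2 ^ k -> nchains k d j = 0.
Proof.
elim: k j => [|k IHk] j /=; first by rewrite expn0 muln1; case: eqP => // ->; rewrite ltnn.
move=> lt_j; rewrite big1_seq // => l /andP[_]; rewrite mem_index_iota => lt_lj.
have [lt_l | le_l] := ltnP l (d * 2 ^ k); first by rewrite IHk.
case: (boolP ((l %| j) && (l != j))) => [/andP[l_j ne_lj] | _]; last by rewrite muln0.
have j0 : 0 < j by lia.
have := proper_divisor_double j0 l_j ne_lj.
by rewrite expnS in lt_j; lia.
Qed.

Lemma nchains_diag k d : 0 < d -> nchains k d (d * 2 ^ k) = 1.
Proof.
move=> d0; elim: k => [|k IHk] /=; first by rewrite expn0 muln1 eqxx.
have pos : 0 < d * 2 ^ k by rewrite muln_gt0 d0 expn_gt0.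
rewrite (big_nat_only _ _ _ _ (d * 2 ^ k)); first last.
- move=> l /andP[_ lt_l] ne_l.
  have [lt_lk | le_kl] := ltnP l (d * 2 ^ k); first by rewrite nchains_small.
  case: (boolP ((l %| _) && (l != _))) => [/andP[l_j ne_lj] | _]; last by rewrite muln0.
  have j0 : 0 < d * 2 ^ k.+1 by rewrite muln_gt0 d0 expn_gt0.
  have := proper_divisor_double j0 l_j ne_lj.
  by rewrite expnS; lia.
- by rewrite pos /= expnS; lia.
rewrite IHk expnS mulnCA dvdn_mull //= mul1n; case: eqP => //; lia.
Qed.

Lemma nchains_divisor_sum k d j : 0 < j ->
  \sum_(1 <= l < j.+1) nchains k d l * (l %| j) = nchains k.+1 d j + nchains k d j.
Proof.
move=> j0 /=.
have -> : nchains k d j = \sum_(1 <= l < j.+1) nchains k d l * (l == j).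
  rewrite (big_nat_only _ _ _ _ j) ?eqxx ?muln1 ?j0 ?ltnSn //.
  by move=> l _ /negbTE ->; rewrite muln0.
rewrite -big_split /=; apply: eq_bigr => l _.
by case: eqP => [->|_]; rewrite ?dvdnn ?eqxx ?muln0 ?muln1 ?andbT ?add0n ?addn0.
Qed.

Lemma sum_proper_divisors_cofactor (G : nat -> nat) j : 0 < j ->
  \sum_(1 <= l < j.+1) G l * ((l %| j) && (l != j)) =
  \sum_(2 <= e < j.+1) G (j %/ e) * (e %| j).
Proof.
move=> j0.
transitivity (\sum_(1 <= l < j.+1) \sum_(2 <= e < j.+1) (l * e == j) * G l).
  apply: eq_big_nat => l /andP[l1 lj].
  case: (boolP ((l %| j) && (l != j))) => [/andP[l_j ne_lj] | not_proper].
    have := proper_divisor_double j0 l_j ne_lj; have := divnK l_j => def_j le_lj.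
    rewrite muln1 (big_nat_only _ _ _ _ (j %/ l)).
    - by rewrite [l * _]mulnC divnK // eqxx mul1n.
    - by have := leq_div j l; nia.
    move=> e _ ne; case: (l * e =P j) => // le; move: ne; rewrite -le mulKn ?eqxx //.
  rewrite muln0 big1_seq // => e; rewrite mem_index_iota => /andP[_ /andP[e2 _]].
  case: eqP => // le; move: not_proper; rewrite -le dvdn_mulr //= negbK => /eqP; nia.
rewrite (@exchange_big_nat _ _ _ 1 j.+1 2 j.+1) /=; apply: eq_big_nat => e /andP[e2 ej].
case: (boolP (e %| j)) => e_j.
  have := divnK e_j => def_j.
  rewrite muln1 (big_nat_only _ _ _ _ (j %/ e)).
  - by rewrite divnK // eqxx mul1n.
  - by have := leq_div j e; nia.
  - move=> l _ ne; case: (l * e =P j) => // le; move: ne; rewrite -le mulnK ?eqxx //; lia.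
rewrite muln0 big1_seq // => l _; case: eqP => // le; move: e_j; rewrite -le dvdn_mull //.
Qed.

Section InverseSquares.
Local Open Scope ring_scope.

Lemma sum_inv_sq_le n : (0 < n)%N ->
  \sum_(2 <= e < n.+1) ((e%:R : rat) ^+ 2)^-1 <= 1 - n%:R^-1.
Proof.
elim: n => [//|[|n] IHn] _; first by rewrite big_geq // divr1 subrr.
rewrite big_nat_recr //=.
have step : ((n.+2%:R : rat) ^+ 2)^-1 <= n.+1%:R^-1 - n.+2%:R^-1.
  have -> : (n.+1%:R^-1 - n.+2%:R^-1 : rat) = (n.+1%:R * n.+2%:R)^-1.
    field; have := ler0n rat n.
    by move=> n_ge0; apply/andP; split; apply/negP => /eqP; lra.
  rewrite lef_pV2 ?posrE ?exprn_gt0 ?mulr_gt0 ?ltr0n //.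
  by rewrite expr2 ler_pM2r ?ltr0n // ler_nat.
by apply: le_trans (lerD (IHn isT) step) _; rewrite addrA subrK.
Qed.

Lemma sum_quotient_sq_le j : (\sum_(2 <= e < j.+1) (j %/ e) ^ 2 <= j ^ 2)%N.
Proof.
case: j => [|j]; first by rewrite big_geq.
rewrite -(ler_nat rat) natr_sum.
apply: (@le_trans _ _ (\sum_(2 <= e < j.+2) j.+1%:R ^+ 2 * ((e%:R : rat) ^+ 2)^-1)).
  apply: ler_sum_nat => e /andP[e2 _].
  rewrite natrX ler_pdivlMr; last by rewrite exprn_gt0 // ltr0n; lia.
  by rewrite -exprMn -natrM ler_pXn2r ?nnegrE ?ler0n ?ler_nat ?leq_divM.
rewrite -mulr_sumr natrX.
apply: (@le_trans _ _ (j.+1%:R ^+ 2 * (1 - j.+1%:R^-1))).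
  by rewrite ler_wpM2l ?exprn_ge0 ?ler0n ?sum_inv_sq_le.
by rewrite mulrBr mulr1 lerBlDr lerDl divr_ge0 ?exprn_ge0 ?ler0n.
Qed.

End InverseSquares.

Lemma nchains_le_sq k d j : 0 < d -> nchains k d j <= j ^ 2.
Proof.
move=> d0; elim: k j => [|k IHk] j /=; first by case: eqP => // <-; rewrite expn_gt0 d0.
case: j => [|j]; first by rewrite big_geq.
apply: (@leq_trans (\sum_(1 <= l < j.+2) l ^ 2 * ((l %| j.+1) && (l != j.+1)))).
  by apply: leq_sum => l _; rewrite leq_mul2r IHk orbT.
rewrite sum_proper_divisors_cofactor //; apply: leq_trans (sum_quotient_sq_le _).
by apply: leq_sum => e _; case: (e %| _); rewrite ?muln1 ?muln0.
Qed.

(* Factorizations j = d * x_1 * ... * x_k with all x_i >= 2; the factors are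
   drawn from 'I_N.+1, which loses nothing as soon as j <= N. *)
Definition nfactorizations (N k d j : nat) : nat :=
  \sum_(t : k.-tuple 'I_N.+1)
     (all (fun x : 'I_N.+1 => 2 <= x) t && (d * \prod_(x <- t) (x : nat) == j)).

Lemma sum_pred1_proper_divisor q j : 0 < q -> 0 < j ->
  \sum_(1 <= l < j.+1) (q == l) * ((l %| j) && (l != j)) = (q %| j) && (q != j).
Proof.
move=> q0 j0; have [le_qj | lt_jq] := leqP q j.
  rewrite (big_nat_only _ _ _ _ q) ?eqxx ?mul1n ?q0 //.
  by move=> l _ /negbTE; rewrite eq_sym => ->.
rewrite big1_seq => [|l /andP[_]]; last by rewrite mem_index_iota => ?; case: eqP => // ?; lia.
by case: (boolP (q %| j)) => // /(dvdn_leq j0); lia.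
Qed.

Lemma count_proper_cofactors N q j : 0 < q -> 0 < j -> j <= N ->
  \sum_(x : 'I_N.+1) ((2 <= x) && (q * x == j)) = (q %| j) && (q != j).
Proof.
move=> q0 j0 le_jN; rewrite -(big_mkord xpredT (fun x => ((2 <= x) && (q * x == j)) : nat)).
case: (boolP ((q %| j) && (q != j))) => [/andP[q_j ne_qj] | not_proper].
  have := proper_divisor_double j0 q_j ne_qj; have := divnK q_j => def_j le_qj.
  rewrite (big_nat_only _ _ _ _ (j %/ q)).
  - by rewrite muln_divA // mulKn // eqxx andbT /=; nia.
  - by have := leq_div j q; nia.
  - move=> x _ ne; case: (q * x =P j) => [def_x|]; last by rewrite andbF.
    by move: ne; rewrite -def_x mulKn // eqxx.
rewrite big1_seq // => x /andP[_]; rewrite mem_index_iota => _.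
case: (q * x =P j) => [def_j|]; last by rewrite andbF.
move: not_proper; rewrite -def_j dvdn_mulr //= negbK => /eqP qx_q.
by have -> : x = 1 by nia.
Qed.

Lemma prod_ge2_gt0 N (t : seq 'I_N.+1) :
  all (fun x : 'I_N.+1 => 2 <= x) t -> 0 < \prod_(x <- t) (x : nat).
Proof.
elim: t => [|x t IHt] /=; first by rewrite big_nil.
by case/andP=> x2 t2; rewrite big_cons muln_gt0 IHt // andbT; lia.
Qed.

Lemma nchains_nfactorizations N k d j : 0 < d -> 0 < j -> j <= N ->
  nchains k d j = nfactorizations N k d j.
Proof.
move=> d0; elim: k j => [|k IHk] j j0 le_jN.
  by rewrite /nfactorizations big_tuple0 /= big_nil muln1.
rewrite /= (eq_big_nat _ _ (F2 := fun l => nfactorizations N k d l * ((l %| j) && (l != j))));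
  last by move=> l lj; rewrite IHk //; lia.
rewrite /nfactorizations big_tuple_cons.
under eq_bigr do rewrite big_distrl /=.
rewrite exchange_big /= [RHS]exchange_big /=; apply: eq_bigr => t _.
set P := \prod_(y <- t) (y : nat).
have split_cons (x : 'I_N.+1) : (((2 <= x) && all (fun x : 'I_N.+1 => 2 <= x) t &&
    (d * \prod_(y <- x :: t) (y : nat) == j)) : nat) =
    all (fun x : 'I_N.+1 => 2 <= x) t * ((2 <= x) && (d * P * x == j)).
  rewrite big_cons -/P [x * _]mulnC mulnA.
  by case: (all _ t); case: (d * P * x == j); case: (1 < x).
rewrite [RHS](eq_bigr _ (fun x _ => split_cons x)) -big_distrr /=.
case: (boolP (all _ t)) => t2; last by rewrite mul0n big1 // => l _; rewrite (negbTE t2).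
rewrite mul1n count_proper_cofactors ?muln_gt0 ?d0 ?prod_ge2_gt0 //.
by rewrite -sum_pred1_proper_divisor ?muln_gt0 ?d0 ?prod_ge2_gt0.
Qed.

Lemma alpha_nfactorizations k m : alpha k m = nfactorizations m k 1 m.
Proof.
rewrite /alpha /nfactorizations -sum1_card big_mkcond /=; apply: eq_bigr => t _.
by rewrite inE mul1n; case: (_ && _).
Qed.

Lemma nchains_alpha k d j : 0 < d -> 0 < j ->
  nchains k d j = if d %| j then alpha k (j %/ d) else 0.
Proof.
move=> d0 j0; rewrite (@nchains_nfactorizations j) //; case: ifP => d_j; last first.
  rewrite /nfactorizations big1 // => t _; case: eqP; rewrite ?andbF // => def_j.
  by move: d_j; rewrite -[in X in X = false]def_j dvdn_mulr.
have q0 : 0 < j %/ d by rewrite divn_gt0 // dvdn_leq.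
rewrite alpha_nfactorizations -(@nchains_nfactorizations (j %/ d)) //.
rewrite (@nchains_nfactorizations j) ?leq_div //; apply: eq_bigr => t _; congr (_ && _).
rewrite mul1n; move: (\prod_(x <- t) (x : nat)) => p.
by rewrite -{1}(divnK d_j) [d * p]mulnC eqn_mul2r (negbTE (lt0n_neq0 d0)).
Qed.

Section UpperTriangular.
Local Open Scope ring_scope.
Context {R : realType}.
Implicit Types A B C : mx R.

Lemma sum_delta (F : nat -> R[i]) a L K :
  \sum_(a <= l < K) (l == L)%:R * F l = if (a <= L < K)%N then F L else 0.
Proof.
rewrite (eq_bigr (fun l => if l == L then F l else 0)) -?big_mkcond ?big_nat1_eq //.
by move=> l _; case: eqP; rewrite ?mul1r ?mul0r.
Qed.

Definition upper A := forall m l, (0 < l)%N -> (l < m)%N -> A m l = 0.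

Lemma upper_colfinite A : upper A -> colfinite A.
Proof. by move=> uA j j0; exists j.+1 => l lt_jl; rewrite uA. Qed.

Lemma is_mxprod_mulU A B P : upper B ->
  (forall i j, (0 < i)%N -> (0 < j)%N -> P i j = mulU A B i j) -> is_mxprod A B P.
Proof. by move=> uB defP i j i0 j0; exists j.+1; split => [l lt_jl|]; rewrite ?uB ?defP. Qed.

Lemma mulUA A B C : upper B -> forall i j, mulU (mulU A B) C i j = mulU A (mulU B C) i j.
Proof.
move=> uB i j; rewrite /mulU.
have widen l : (1 <= l < j.+1)%N ->
    (\sum_(1 <= m < l.+1) A i m * B m l) * C l j = \sum_(1 <= m < j.+1) A i m * B m l * C l j.
  move=> /andP[l1 lt_lj]; rewrite mulr_suml [RHS](@big_nat_trunc _ _ _ _ _ l.+1) //.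
  by move=> m lt_lm; rewrite uB ?mulr0 ?mul0r //; lia.
rewrite (eq_big_nat _ _ widen) (@exchange_big_nat _ _ _ 1 j.+1 1 j.+1) /=.
by apply: eq_bigr => m _; rewrite mulr_sumr; apply: eq_bigr => l _; rewrite mulrA.
Qed.

Lemma eq_mulUr A B B' i j : (forall l, (0 < l)%N -> B l j = B' l j) ->
  mulU A B i j = mulU A B' i j.
Proof. by move=> eqB; apply: eq_big_nat => l /andP[l1 _]; rewrite eqB. Qed.

Lemma eq_mulUl A A' B i j : (forall l, (0 < l)%N -> A i l = A' i l) ->
  mulU A B i j = mulU A' B i j.
Proof. by move=> eqA; apply: eq_big_nat => l /andP[l1 _]; rewrite eqA. Qed.

Lemma mulU1 A i j : (0 < j)%N -> mulU A (idmx R) i j = A i j.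
Proof.
by move=> j0; rewrite /mulU (eq_bigr _ (fun l _ => mulrC _ _)) sum_delta j0 ltnSn.
Qed.

(* Back substitution for a unitriangular [A]; the fuel [n] only has to exceed [j - i]. *)
Fixpoint uinv_rec A (n i j : nat) : R[i] :=
  if n is n'.+1 then
    if i == j then 1 else if (j < i)%N then 0
    else - \sum_(i.+1 <= l < j.+1) A i l * uinv_rec A n' l j
  else (i == j)%:R.

Definition uinv A : mx R := fun i j => uinv_rec A (j - i) i j.

Lemma uinv_rec_fuel A n m i j : (j - i <= n)%N -> (j - i <= m)%N ->
  uinv_rec A n i j = uinv_rec A m i j.
Proof.
elim: n m i => [|n IHn] [|m] i le_n le_m //=; case: eqP => // ne_ij.
- by rewrite ifT //; lia.
- by rewrite ifT //; lia.
case: ifP => // _; congr (- _); apply: eq_big_nat => l lt_il; rewrite (IHn m) //; lia.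
Qed.

Lemma uinvE A [i j : nat] : (i < j)%N -> uinv A i j = - \sum_(i.+1 <= l < j.+1) A i l * uinv A l j.
Proof.
move=> lt_ij; rewrite /uinv; have -> : (j - i = (j - i).-1.+1)%N by lia.
rewrite /= ifF; last by apply/eqP; lia.
rewrite ifF; last by apply/negbTE; rewrite -leqNgt ltnW.
by congr (- _); apply: eq_big_nat => l lt_il; rewrite (uinv_rec_fuel _ _ (j - l)%N) //; lia.
Qed.

Lemma uinv_upper A : upper (uinv A).
Proof. by move=> m l _ lt_lm; rewrite /uinv (_ : l - m = 0)%N /=; [case: eqP => //; lia | lia]. Qed.

Lemma uinv_diag A i : uinv A i i = 1.
Proof. by rewrite /uinv subnn /= eqxx. Qed.

Definition unitriangular A := upper A /\ forall i, (0 < i)%N -> A i i = 1.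

Lemma uinv_unitriangular A : unitriangular (uinv A).
Proof. by split=> [|i _]; [exact: uinv_upper | exact: uinv_diag]. Qed.

Lemma mulUV [A] : unitriangular A ->
  forall i j, (0 < i)%N -> (0 < j)%N -> mulU A (uinv A) i j = idmx R i j.
Proof.
move=> [uA A_diag] i j i0 j0; rewrite /mulU /idmx; have [lt_ij | lt_ji | <-] := ltngtP i j.
- have [le_ij1 lt_ij1] : (i <= j.+1)%N /\ (i < j.+1)%N by lia.
  rewrite (big_cat_nat i0 le_ij1) (big_ltn lt_ij1) /=.
  rewrite big1_seq ?add0r => [|l /andP[_]]; last first.
    by rewrite mem_index_iota => ?; rewrite uA ?mul0r //; lia.
  by rewrite A_diag // mul1r (uinvE A lt_ij) addNr.
- by rewrite big1_seq // => l /andP[_]; rewrite mem_index_iota => ?; rewrite uA ?mul0r //; lia.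
- rewrite big_nat_recr //= big1_seq ?add0r => [|l /andP[_]]; last first.
    by rewrite mem_index_iota => ?; rewrite uA ?mul0r //; lia.
  by rewrite A_diag // uinv_diag mulr1.
Qed.

Lemma mulVU [A] : unitriangular A ->
  forall i j, (0 < i)%N -> (0 < j)%N -> mulU (uinv A) A i j = idmx R i j.
Proof.
move=> A_unit i j i0 j0; set B := uinv A; set C := uinv B.
have uB : upper B := uinv_upper A.
have BC l : (0 < l)%N -> mulU B C l j = idmx R l j.
  by move=> l0; apply: mulUV => //; exact: uinv_unitriangular.
(* [BA = (BA)(BC) = B(AB)C = BC], as [B] is a right inverse of [A] and [C] one of [B]. *)
transitivity (mulU (mulU B A) (mulU B C) i j).
  by rewrite -(mulU1 _ i _ j0); apply: eq_mulUr => l l0; rewrite BC.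
rewrite -mulUA //; transitivity (mulU (mulU B (idmx R)) C i j); last first.
  by rewrite -BC //; apply: eq_mulUl => l l0; rewrite mulU1.
apply: eq_mulUl => l l0; rewrite (mulUA _ _ _ A_unit.1); apply: eq_mulUr => m m0.
by rewrite mulUV.
Qed.

End UpperTriangular.

Section ColumnFiniteProducts.
Local Open Scope ring_scope.
Context {R : realType}.
Implicit Types A B P Q X : mx R.

Lemma is_mxprodE [A B P i j K] : is_mxprod A B P -> (0 < i)%N -> (0 < j)%N ->
  (forall l, (K <= l)%N -> B l j = 0) -> P i j = \sum_(1 <= l < K) A i l * B l j.
Proof.
move=> AB i0 j0 BK; have [N [BN ->]] := AB i j i0 j0.
rewrite -(big_nat_trunc _ (leq_maxl N K)) => [|l le_Nl]; last by rewrite BN ?mulr0.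
by rewrite (big_nat_trunc _ (leq_maxr N K)) // => l le_Kl; rewrite BK ?mulr0.
Qed.

Lemma colfinite_bound [A] N : colfinite A ->
  exists M, forall l m, (0 < l < N)%N -> (M <= m)%N -> A m l = 0.
Proof.
move=> cA; elim: N => [|N [M AM]]; first by exists 0%N => l m; rewrite ltn0 andbF.
have [-> | N0] := posnP N; first by exists 0%N => l m; lia.
have [M' AM'] := cA N N0; exists (maxn M M') => l m /andP[l0 lt_lN1] le_m.
have [lt_lN | ->] : (l < N)%N \/ l = N by lia.
- by apply: AM; rewrite ?l0 //; apply: leq_trans le_m; exact: leq_maxl.
- by apply: AM'; apply: leq_trans le_m; exact: leq_maxr.
Qed.

(* [Xi X = I] and [P Xi = Q] give [P = Q X]; the double sums can be exchanged
   because [Xi] is column-finite. *)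
Lemma is_mxprod_cancel [X Xi P Q i j N] :
  colfinite Xi -> is_mxprod Xi X (idmx R) -> is_mxprod P Xi Q -> (0 < i)%N -> (0 < j)%N ->
  (forall l, (N <= l)%N -> X l j = 0) -> P i j = \sum_(1 <= l < N) Q i l * X l j.
Proof.
move=> cXi XiX PXi i0 j0 XN; have [M XiM] := colfinite_bound N cXi.
set K := maxn M j.+1.
have id_col m : (0 < m)%N -> (m == j)%:R = \sum_(1 <= l < N) Xi m l * X l j.
  by move=> m0; rewrite -(is_mxprodE XiX).
have Q_row l : (0 < l < N)%N -> Q i l = \sum_(1 <= m < K) P i m * Xi m l.
  move=> /andP[l0 lt_lN]; apply: (is_mxprodE PXi) => // m le_Km.
  by apply: XiM; rewrite ?l0 //; move: le_Km; rewrite geq_max => /andP[].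
have lt_jK : (1 <= j < K)%N by rewrite j0 leq_max ltnSn orbT.
transitivity (\sum_(1 <= m < K) (m == j)%:R * P i m); first by rewrite sum_delta lt_jK.
transitivity (\sum_(1 <= m < K) \sum_(1 <= l < N) P i m * (Xi m l * X l j)).
  by apply: eq_big_nat => m /andP[m0 _]; rewrite id_col // mulrC mulr_sumr.
rewrite exchange_big_nat /=; apply: eq_big_nat => l lN; rewrite Q_row // mulr_suml.
by apply: eq_bigr => m _; rewrite mulrA.
Qed.

End ColumnFiniteProducts.

Section DivisorChainMatrix.
Local Open Scope ring_scope.
Context {R : realType}.

Lemma DmIpow_nchains k d j : DmIpow R k d j = (nchains k d j)%:R.
Proof.
elim: k d j => [|k IHk] d j //.
rewrite /DmIpow iterS -/(DmIpow R k) /mulU /= natr_sum; apply: eq_bigr => l _.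
rewrite IHk natrM /Dmx /idmx; congr (_ * _).
by case: (boolP (l %| j)%N); case: eqP => [->|]; rewrite ?dvdnn ?subrr ?subr0 //= => _ ->.
Qed.

Lemma Zmx_nchains i j : Zmx R i j = (nchains (logn 2 i) (i %/ 2 ^ logn 2 i) j)%:R.
Proof.
rewrite /Zmx; case: ifP => i_odd; last by rewrite DmIpow_nchains.
by rewrite logn_coprime ?coprime2n // expn0 divn1.
Qed.

Lemma Zmx_odd_pow2 d k j : odd d -> Zmx R (d * 2 ^ k)%N j = (nchains k d j)%:R.
Proof. by move=> d_odd; rewrite Zmx_nchains logn2_odd_mul // mulnK ?expn_gt0. Qed.

(* Row [2i] of [X] is row [i] of [X (D - I)]; for column-finite [X] this is [X D = J X]. *)
Definition row_doubling (X : mx R) := forall i j, (0 < i)%N -> (0 < j)%N ->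
  X (2 * i)%N j = mulU X (Dmx R) i j - X i j.

Lemma row_doubling_unique X Y : odd_rows_unit X -> odd_rows_unit Y ->
  row_doubling X -> row_doubling Y -> mxeq X Y.
Proof.
move=> oX oY dX dY i j i0; have [d [k [d_odd ->]]] := odd_mul_pow2P i0.
have d0 := odd_gt0 d_odd; elim: k j => [|k IHk] j j0.
  by rewrite expn0 muln1 oX ?oY.
have dk0 : (0 < d * 2 ^ k)%N by rewrite muln_gt0 d0 expn_gt0.
rewrite expnS mulnCA dX ?dY // IHk //; congr (_ - _).
by apply: eq_big_nat => l /andP[l0 _]; rewrite IHk.
Qed.

Lemma Dmx_upper : upper (Dmx R).
Proof. by move=> m l l0 lt_lm; rewrite /Dmx gtnNdvd. Qed.

Lemma sum_Jmx (F : nat -> R[i]) i N : (0 < i)%N -> (forall l, (N <= l)%N -> F l = 0) ->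
  \sum_(1 <= l < N) Jmx R i l * F l = F i + F (2 * i)%N.
Proof.
move=> i0 FN; have Jmx_delta l : Jmx R i l = (l == i)%:R + (l == 2 * i)%N%:R.
  rewrite /Jmx; case: (l =P i) => [->|_] /=; last by rewrite add0r.
  by rewrite (_ : (i == 2 * i)%N = false) ?addr0 //; apply/eqP; lia.
under eq_bigr do rewrite Jmx_delta mulrDl.
rewrite big_split /= !sum_delta i0 (_ : 0 < 2 * i)%N /=; last by lia.
by case: ltnP => [_|/FN ->]; case: ltnP => [_|/FN ->].
Qed.

Lemma conj_D_J_row_doubling X : colfinite X -> conj_D_J X -> row_doubling X.
Proof.
move=> cX [Xi [XD [cXi XXi XiX XDdef XDXi]]] i j i0 j0; have [N XN] := cX j j0.
have XDE : XD i j = mulU X (Dmx R) i j.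
  by apply: (is_mxprodE XDdef) => // l lt_jl; rewrite Dmx_upper.
have := is_mxprod_cancel cXi XiX XDXi i0 j0 XN; rewrite sum_Jmx // XDE => ->.
by rewrite [X i j + _]addrC addrK.
Qed.

Lemma Zmx_upper : upper (Zmx R).
Proof.
move=> i j j0 lt_ji; have [d [k [d_odd def_i]]] := odd_mul_pow2P (leq_ltn_trans (leq0n j) lt_ji).
by rewrite def_i Zmx_odd_pow2 // nchains_small -?def_i.
Qed.

Lemma Zmx_diag i : (0 < i)%N -> Zmx R i i = 1.
Proof.
move=> i0; have [d [k [d_odd ->]]] := odd_mul_pow2P i0.
by rewrite Zmx_odd_pow2 // nchains_diag // odd_gt0.
Qed.

Lemma Zmx_unitriangular : unitriangular (Zmx R).
Proof. by split; [exact: Zmx_upper | exact: Zmx_diag]. Qed.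

Lemma Zmx_row_doubling : row_doubling (Zmx R).
Proof.
move=> i j i0 j0; have [d [k [d_odd ->]]] := odd_mul_pow2P i0.
rewrite mulnCA -expnS !Zmx_odd_pow2 // /mulU /Dmx.
under eq_bigr do rewrite Zmx_odd_pow2 // -natrM.
by rewrite -natr_sum nchains_divisor_sum // natrD addrK.
Qed.

Lemma mulU_Zmx_Dmx i j : (0 < i)%N -> (0 < j)%N ->
  mulU (Zmx R) (Dmx R) i j = mulU (Jmx R) (Zmx R) i j.
Proof.
move=> i0 j0; rewrite /mulU sum_Jmx // => [|l lt_jl]; last by rewrite Zmx_upper.
by rewrite Zmx_row_doubling // addrC subrK.
Qed.

Lemma conj_D_J_Zmx : conj_D_J (Zmx R).
Proof.
have [uZ _] := Zmx_unitriangular; have uZi := uinv_upper (Zmx R).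
exists (uinv (Zmx R)), (mulU (Zmx R) (Dmx R)); split.
- exact: upper_colfinite.
- by apply: is_mxprod_mulU => // i j i0 j0; rewrite (mulUV Zmx_unitriangular).
- by apply: is_mxprod_mulU => // i j i0 j0; rewrite (mulVU Zmx_unitriangular).
- exact: is_mxprod_mulU Dmx_upper _.
apply: is_mxprod_mulU => // i j i0 j0.
rewrite (eq_mulUl _ (mulU (Jmx R) (Zmx R))) => [|l l0]; last by rewrite mulU_Zmx_Dmx.
by rewrite mulUA // (eq_mulUr _ _ (idmx R)) ?mulU1 // => l l0; rewrite (mulUV Zmx_unitriangular).
Qed.

Lemma DR0_Zmx : DR0 (Zmx R).
Proof.
split; first exact/upper_colfinite/Zmx_upper.
exists 1, 2; split => // i j i0 j0; rewrite mul1r powR_mulrn ?ler0n // -natrX.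
split=> [|]; first by rewrite ltr_nat => lt_ji; rewrite Zmx_upper //; nia.
have [d [k [d_odd ->]]] := odd_mul_pow2P i0.
by rewrite Zmx_odd_pow2 // normr_nat rmorph_nat ler_nat nchains_le_sq // odd_gt0.
Qed.

Lemma Zmx_alpha d k j : odd d -> (0 < j)%N ->
  Zmx R (d * 2 ^ k)%N j = if (d %| j)%N then (alpha k (j %/ d))%:R else 0.
Proof.
by move=> d_odd j0; rewrite Zmx_odd_pow2 // nchains_alpha ?(odd_gt0 d_odd) //; case: ifP.
Qed.

Lemma Zmx_mul_odd i j m : (0 < i)%N -> (0 < j)%N -> odd m ->
  Zmx R (i * m)%N (j * m)%N = Zmx R i j.
Proof.
move=> i0 j0 m_odd; have [d [k [d_odd ->]]] := odd_mul_pow2P i0.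
have m0 := odd_gt0 m_odd.
rewrite mulnAC !Zmx_alpha ?oddM ?d_odd ?muln_gt0 ?j0 //.
by rewrite dvdn_pmul2r // divnMr.
Qed.

End DivisorChainMatrix.

Local Open Scope ring_scope.

Theorem lemma4p4 (R : realType) :
  (* (a) *)
  odd_rows_unit (Zmx R) /\
  (* (b) *)
  (forall i j d k, (0 < i)%N -> (0 < j)%N -> odd d -> (1 <= k)%N ->
     i = (d * 2 ^ k)%N ->
     Zmx R i j = if (d %| j)%N then (alpha k (j %/ d))%:R else 0) /\
  (* (c) *)
  (forall i j m, (0 < i)%N -> (0 < j)%N -> odd m ->
     Zmx R (i * m)%N (j * m)%N = Zmx R i j) /\
  (* (d) upper unitriangular *)
  (forall i j, (0 < i)%N -> (0 < j)%N -> (j < i)%N -> Zmx R i j = 0) /\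
  (forall i, (0 < i)%N -> Zmx R i i = 1) /\
  (* (e) *)
  conj_D_J (Zmx R) /\
  (* (f) *)
  DR0 (Zmx R) /\
  (* uniqueness among column-finite matrices satisfying (a) and (e) *)
  (forall X : mx R, colfinite X -> odd_rows_unit X -> conj_D_J X ->
     mxeq X (Zmx R)).
Proof.
have Zmx_odd_rows : odd_rows_unit (Zmx R) by move=> i j _ _ i_odd; rewrite /Zmx i_odd.
split=> //; split=> [i j d k _ j0 d_odd _ -> |]; first exact: Zmx_alpha.
split; first exact: Zmx_mul_odd.
split=> [i j _ j0 lt_ji | ]; first exact: Zmx_upper.
split; first exact: Zmx_diag.
split; first exact: conj_D_J_Zmx.
split; first exact: DR0_Zmx.
move=> X cX oX cjX; apply: row_doubling_unique => //.
  exact: conj_D_J_row_doubling.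
exact: Zmx_row_doubling.
Qed.
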